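(* Let $\ell:\mathbb{R}\to\mathbb{R}$ be non-decreasing, convex and non-negative, differentiable on $[-\ell(0)/2,\infty)$ with $\ell'(z)>0$ for $z\ge-\ell(0)/2$. Let $d=\sup\{z\in\mathbb{R}:\partial\ell(z)=\{0\}\}$, and $d=-\infty$ if there is no such $z$; assume $-\ell(0)/2>d$. For $\rho\ge-\ell(0)/2$ and $z\ge0$ define $\xi(z,\rho)=\frac{\ell(\rho+z)+\ell(\rho-z)-2\ell(\rho)}{z\ell'(\rho)}$ for $z>0$ and $\xi(0,\rho)=0$. Suppose there is a function $\bar\xi:[0,\infty)\to\mathbb{R}$ that is continuous and strictly increasing with $\bar\xi(0)=0$ and $\lim_{z\to\infty}\bar\xi(z)>1$, such that $\sup_{\rho\ge-\ell(0)/2}\xi(z,\rho)\le\bar\xi(z)$ for all $z\ge0$. Let $\psi(\theta,\rho)=\ell(\rho)-\inf_{z\in\mathbb{R}}\{\frac{1+\theta}{2}\ell(\rho-z)+\frac{1-\theta}{2}\ell(\rho+z)\}$. Then there exist $\varepsilon>0$ and a function $\widetilde\psi$ on $[0,\varepsilon]$ such that $\widetilde\psi(0)=0$, $\widetilde\psi(\theta)>0$ for $0<\theta\le\varepsilon$, $\widetilde\psi$ is continuous and strictly increasing on $[0,\varepsilon]$, and $\widetilde\psi(\theta)\le\inf_{\rho\ge-\ell(0)/2}\psi(\theta,\rho)$ for $0\le\theta\le\varepsilon$.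
   Context: $\partial\ell(z)$ denotes the subdifferential of the convex function $\ell$ at $z$. *)

From Stdlib Require Import Reals.
From Coquelicot Require Import Coquelicot.
Open Scope R_scope.

Definition convex_fun (l : R -> R) : Prop :=
  forall x y t, 0 <= t <= 1 -> l (t * x + (1 - t) * y) <= t * l x + (1 - t) * l y.

Definition nondecreasing (l : R -> R) : Prop := forall x y, x <= y -> l x <= l y.

Definition subdiff (l : R -> R) (z : R) : R -> Prop :=
  fun g => forall y, l y >= l z + g * (y - z).

Definition subdiff_is_zero (l : R -> R) (z : R) : Prop :=
  forall g, subdiff l z g <-> g = 0.

(* "d < c" where d = sup {z | subdiff l z = {0}} (d = -oo if the set is empty):
   the set has an upper bound strictly below c. *)
Definition d_lt (l : R -> R) (c : R) : Prop :=
  exists b, b < c /\ forall z, subdiff_is_zero l z -> z <= b.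

Definition xi (l : R -> R) (z rho : R) : R :=
  if Rlt_dec 0 z then (l (rho + z) + l (rho - z) - 2 * l rho) / (z * Derive l rho)
  else 0.

(* inf_z { (1+θ)/2 l(ρ-z) + (1-θ)/2 l(ρ+z) } (as a real; finite when l >= 0). *)
Definition inner_inf (l : R -> R) (theta rho : R) : R :=
  real (Glb_Rbar (fun v => exists z,
          v = (1 + theta) / 2 * l (rho - z) + (1 - theta) / 2 * l (rho + z))).

Definition psi (l : R -> R) (theta rho : R) : R := l rho - inner_inf l theta rho.

Definition strict_incr_on (A : R -> Prop) (f : R -> R) : Prop :=
  forall x y, A x -> A y -> x < y -> f x < f y.

(** Set [c := l'(-l(0)/2)]. For [0 <= z <= 1] and [rho >= -l(0)/2], taking the
    point [z] in the infimum defining [psi], the tangent line of [l] at [rho] and the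
    bound [xi(z, rho) <= xibar(z)] give [psi(theta, rho) >= c z (theta - xibar z) / 2],
    since [l'] is nondecreasing and hence at least [c]. So
    [theta |-> c/2 * sup_(0 <= z <= 1) z (theta - xibar z)] is a uniform lower bound.
    It vanishes at [0], is positive for [theta > 0] because [xibar] is continuous at
    [0] with [xibar 0 = 0], is 1-Lipschitz up to the factor [c/2], and is strictly
    increasing because [xibar >= 0]. Hence [eps = 1] works. *)
From Stdlib Require Import Reals Psatz.
From Coquelicot Require Import Coquelicot.
Open Scope R_scope.

Lemma Lub_Rbar_real_correct (E : R -> Prop) (M v0 : R) :
  E v0 -> (forall v, E v -> v <= M) ->
  (forall v, E v -> v <= real (Lub_Rbar E)) /\
  (forall b, (forall v, E v -> v <= b) -> real (Lub_Rbar E) <= b).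
Proof.
  intros Hv0 HM.
  destruct (Lub_Rbar_correct E) as [Hub Hleast].
  assert (HleM : Rbar_le (Lub_Rbar E) M) by (apply Hleast; intros v Hv; apply HM, Hv).
  assert (Hv0le : Rbar_le v0 (Lub_Rbar E)) by (apply Hub, Hv0).
  destruct (Lub_Rbar E) as [r| |]; simpl in *; try contradiction.
  split.
  - intros v Hv. exact (Hub v Hv).
  - intros b Hb. exact (Hleast (Finite b) Hb).
Qed.

Lemma real_Glb_Rbar_le (E : R -> Prop) (v : R) :
  E v -> (forall w, E w -> 0 <= w) -> real (Glb_Rbar E) <= v.
Proof.
  intros Hv Hnonneg.
  destruct (Glb_Rbar_correct E) as [Hlb Hgreatest].
  assert (H0le : Rbar_le 0 (Glb_Rbar E)) by (apply Hgreatest; intros w Hw; apply Hnonneg, Hw).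
  assert (Hlev : Rbar_le (Glb_Rbar E) v) by (apply Hlb, Hv).
  destruct (Glb_Rbar E); simpl in *; easy.
Qed.

Lemma convex_tangent_le (l : R -> R) (x y : R) :
  convex_fun l -> ex_derive l x -> l x + (y - x) * Derive l x <= l y.
Proof.
  intros Hconv Hdx.
  set (h := y - x); set (D := Derive l x).
  assert (Hlim : derivable_pt_lim (fun t => l (x + t * h)) 0 (h * D)).
  { apply is_derive_Reals.
    apply (is_derive_comp l (fun t => x + t * h) 0 D h).
    - rewrite Rmult_0_l, Rplus_0_r. now apply Derive_correct.
    - auto_derive; [easy | ring]. }
  apply Rnot_lt_le; intro Hlt.
  destruct (Hlim (h * D - (l y - l x)) ltac:(lra)) as [del Hdel].
  pose proof (cond_pos del) as Hdel_pos.
  pose proof (Rmin_r 1 (del / 2)) as Hmin_del.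
  set (u := Rmin 1 (del / 2)) in Hmin_del.
  assert (Hu : 0 < u <= 1) by (split; [apply Rmin_glb_lt; lra | apply Rmin_l]).
  assert (Hu_del : Rabs u < del) by (rewrite Rabs_pos_eq; lra).
  specialize (Hdel u ltac:(lra) Hu_del).
  rewrite Rmult_0_l, Rplus_0_r, Rplus_0_l in Hdel.
  assert (Hsecant : l (x + u * h) <= u * l y + (1 - u) * l x).
  { replace (x + u * h) with (u * y + (1 - u) * x) by (unfold h; ring).
    apply Hconv; lra. }
  assert (Hquot : (l (x + u * h) - l x) / u <= l y - l x).
  { apply Rle_div_l; lra. }
  rewrite Rabs_minus_sym in Hdel.
  pose proof (Rle_abs (h * D - (l (x + u * h) - l x) / u)).
  lra.
Qed.

Lemma Derive_convex_le (l : R -> R) (x y : R) :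
  convex_fun l -> ex_derive l x -> ex_derive l y -> x <= y -> Derive l x <= Derive l y.
Proof.
  intros Hconv Hdx Hdy Hxy.
  pose proof (convex_tangent_le l x y Hconv Hdx).
  pose proof (convex_tangent_le l y x Hconv Hdy).
  destruct (Req_dec x y) as [<- | Hne]; [lra | nra].
Qed.

Section PsiLowerBound.

Variable l : R -> R.
Hypothesis l_nondecreasing : nondecreasing l.
Hypothesis l_convex : convex_fun l.
Hypothesis l_nonneg : forall z, 0 <= l z.

Lemma psi_ge (theta rho z : R) : -1 <= theta <= 1 ->
  l rho - ((1 + theta) / 2 * l (rho - z) + (1 - theta) / 2 * l (rho + z))
  <= psi l theta rho.
Proof.
  intros Htheta. unfold psi, inner_inf.
  enough (real (Glb_Rbar (fun v => exists z',
            v = (1 + theta) / 2 * l (rho - z') + (1 - theta) / 2 * l (rho + z')))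
          <= (1 + theta) / 2 * l (rho - z) + (1 - theta) / 2 * l (rho + z)) by lra.
  apply real_Glb_Rbar_le; [now exists z|].
  intros w [z' ->].
  pose proof (l_nonneg (rho - z')); pose proof (l_nonneg (rho + z')).
  apply Rplus_le_le_0_compat; apply Rmult_le_pos; lra.
Qed.

Lemma psi_nonneg (theta rho : R) : -1 <= theta <= 1 -> 0 <= psi l theta rho.
Proof.
  intros Htheta. pose proof (psi_ge theta rho 0 Htheta) as H.
  rewrite Rminus_0_r, Rplus_0_r in H. lra.
Qed.

(* With [D := l'(rho)], [A := l(rho+z) + l(rho-z) - 2 l(rho) <= z D X] and
   [B := l(rho+z) - l(rho-z) >= z D], and taking [z] in the infimum gives
   [psi >= (theta B - A) / 2 >= z D (theta - X) / 2]. *)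
Lemma psi_ge_xi (theta rho z X c : R) :
  0 <= theta <= 1 -> ex_derive l rho -> 0 < Derive l rho -> 0 <= c <= Derive l rho ->
  0 <= z -> xi l z rho <= X -> c * z * (theta - X) / 2 <= psi l theta rho.
Proof.
  intros Htheta Hder HDpos Hc Hz Hxi.
  pose proof (psi_nonneg theta rho ltac:(lra)) as Hpsi0.
  destruct (Rle_dec theta X) as [HleX | HgtX].
  { assert (0 <= c * z * (X - theta)) by (apply Rmult_le_pos; [apply Rmult_le_pos|]; lra).
    lra. }
  destruct (Req_dec z 0) as [-> | Hz0]; [lra|].
  set (D := Derive l rho) in *.
  unfold xi in Hxi; destruct (Rlt_dec 0 z) as [_ | ]; [|lra]; fold D in Hxi.
  assert (HA : l (rho + z) + l (rho - z) - 2 * l rho <= z * D * X).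
  { apply Rle_div_l in Hxi; [lra | nra]. }
  pose proof (convex_tangent_le l rho (rho + z) l_convex Hder) as Htan.
  fold D in Htan; replace (rho + z - rho) with z in Htan by ring.
  pose proof (l_nondecreasing (rho - z) rho ltac:(lra)) as Hmono.
  pose proof (psi_ge theta rho z ltac:(lra)) as Hpsi.
  assert (0 <= theta * (l (rho + z) - l (rho - z) - z * D)) by (apply Rmult_le_pos; lra).
  assert (0 <= z * (theta - X) * (D - c)) by (apply Rmult_le_pos; [apply Rmult_le_pos|]; lra).
  nra.
Qed.

End PsiLowerBound.

Definition gap_sup (xb : R -> R) (theta : R) : R :=
  real (Lub_Rbar (fun v => exists z, 0 <= z <= 1 /\ v = z * (theta - xb z))).

Section GapSup.

Variable xb : R -> R.
Hypothesis xb_nonneg : forall z, 0 <= z <= 1 -> 0 <= xb z.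

Lemma gap_sup_correct (theta : R) :
  (forall z, 0 <= z <= 1 -> z * (theta - xb z) <= gap_sup xb theta) /\
  (forall b, (forall z, 0 <= z <= 1 -> z * (theta - xb z) <= b) -> gap_sup xb theta <= b).
Proof.
  destruct (Lub_Rbar_real_correct
              (fun v => exists z, 0 <= z <= 1 /\ v = z * (theta - xb z)) (Rabs theta) 0)
    as [Hub Hleast].
  - exists 0. split; [lra | ring].
  - intros v [z [Hz ->]]. pose proof (xb_nonneg z Hz). pose proof (Rle_abs theta).
    pose proof (Rabs_pos theta). nra.
  - split.
    + intros z Hz. apply Hub. now exists z.
    + intros b Hb. apply Hleast. intros v [z [Hz ->]]. now apply Hb.
Qed.

Lemma gap_sup_ge (theta z : R) : 0 <= z <= 1 -> z * (theta - xb z) <= gap_sup xb theta.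
Proof. apply gap_sup_correct. Qed.

Lemma gap_sup_le (theta b : R) :
  (forall z, 0 <= z <= 1 -> z * (theta - xb z) <= b) -> gap_sup xb theta <= b.
Proof. apply gap_sup_correct. Qed.

Lemma gap_sup0 : gap_sup xb 0 = 0.
Proof.
  apply Rle_antisym.
  - apply gap_sup_le. intros z Hz. pose proof (xb_nonneg z Hz). nra.
  - pose proof (gap_sup_ge 0 0 ltac:(lra)). lra.
Qed.

Lemma gap_sup_pos (theta : R) :
  continuous_on (fun z => 0 <= z) xb -> xb 0 = 0 -> 0 < theta -> 0 < gap_sup xb theta.
Proof.
  intros Hcont Hxb0 Htheta.
  destruct (proj1 (filterlim_locally _ _) (Hcont 0 (Rle_refl 0)) (mkposreal (theta / 2) ltac:(lra)))
    as [del Hdel].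
  pose proof (cond_pos del) as Hdel_pos.
  pose proof (Rmin_r 1 (del / 2)) as Hmin_del.
  set (z := Rmin 1 (del / 2)) in Hmin_del.
  assert (Hz : 0 < z <= 1) by (split; [apply Rmin_glb_lt; lra | apply Rmin_l]).
  assert (Hz_ball : ball 0 del z)
    by (change (Rabs (z - 0) < del); rewrite Rminus_0_r, Rabs_pos_eq; lra).
  specialize (Hdel z Hz_ball ltac:(simpl; lra)).
  change (Rabs (xb z - xb 0) < theta / 2) in Hdel.
  rewrite Hxb0, Rminus_0_r in Hdel. pose proof (Rle_abs (xb z)).
  pose proof (gap_sup_ge theta z ltac:(lra)). nra.
Qed.

Lemma gap_sup_lipschitz (a b : R) : gap_sup xb a <= gap_sup xb b + Rabs (a - b).
Proof.
  apply gap_sup_le. intros z Hz.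
  pose proof (gap_sup_ge b z Hz).
  assert (z * (a - b) <= Rabs (a - b)).
  { pose proof (Rle_abs (a - b)). pose proof (Rabs_pos (a - b)).
    apply Rle_trans with (z * Rabs (a - b)); [apply Rmult_le_compat_l|]; nra. }
  lra.
Qed.

Lemma gap_sup_continuous (x : R) : continuous (gap_sup xb) x.
Proof.
  apply (proj2 (filterlim_locally _ _)). intros eps.
  exists eps. intros y Hy.
  change (Rabs (y - x) < eps) in Hy. change (Rabs (gap_sup xb y - gap_sup xb x) < eps).
  pose proof (gap_sup_lipschitz x y). pose proof (gap_sup_lipschitz y x).
  rewrite Rabs_minus_sym in H.
  apply Rabs_lt_between; lra.
Qed.

(* Since [xb >= 0], [b * z (a - xb z) <= a * z (b - xb z)] for [0 <= a <= b]. *)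
Lemma gap_sup_scale_le (a b : R) :
  0 <= a <= b -> 0 < b -> b * gap_sup xb a <= a * gap_sup xb b.
Proof.
  intros Hab Hb.
  enough (gap_sup xb a <= a * gap_sup xb b / b) by (apply (Rle_div_r _ _ _ Hb) in H; lra).
  apply gap_sup_le. intros z Hz. apply (Rle_div_r _ _ _ Hb).
  pose proof (gap_sup_ge b z Hz). pose proof (xb_nonneg z Hz).
  assert (0 <= (b - a) * (z * xb z)) by (apply Rmult_le_pos; [lra | apply Rmult_le_pos; lra]).
  assert (a * (z * (b - xb z)) <= a * gap_sup xb b) by (apply Rmult_le_compat_l; lra).
  nra.
Qed.

End GapSup.

Theorem lemma7 (l : R -> R) (xibar : R -> R) :
  nondecreasing l ->
  convex_fun l ->
  (forall z, 0 <= l z) ->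
  (forall z, - l 0 / 2 <= z -> ex_derive l z /\ 0 < Derive l z) ->
  d_lt l (- l 0 / 2) ->
  continuous_on (fun z => 0 <= z) xibar ->
  strict_incr_on (fun z => 0 <= z) xibar ->
  xibar 0 = 0 ->
  Rbar_lt (Finite 1) (Lim xibar p_infty) ->
  (forall z rho, 0 <= z -> - l 0 / 2 <= rho -> xi l z rho <= xibar z) ->
  exists eps, 0 < eps /\
    exists psit : R -> R,
      psit 0 = 0 /\
      (forall theta, 0 < theta <= eps -> 0 < psit theta) /\
      continuous_on (fun t => 0 <= t <= eps) psit /\
      strict_incr_on (fun t => 0 <= t <= eps) psit /\
      (forall theta rho, 0 <= theta <= eps -> - l 0 / 2 <= rho ->
         psit theta <= psi l theta rho).
Proof.
  intros Hmono Hconv Hnonneg Hder _ Hcont Hincr Hxb0 _ Hxi.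
  set (r0 := - l 0 / 2) in *.
  set (c := Derive l r0).
  assert (Hc : 0 < c) by (apply Hder; lra).
  assert (Hxb_nonneg : forall z, 0 <= z <= 1 -> 0 <= xibar z).
  { intros z [Hz _]. destruct (Req_dec z 0) as [-> | Hz0]; [lra|].
    rewrite <- Hxb0. left. apply Hincr; lra. }
  exists 1. split; [lra|].
  exists (fun theta => c / 2 * gap_sup xibar theta).
  split; [rewrite gap_sup0; [ring | exact Hxb_nonneg]|].
  split.
  { intros theta Htheta. apply Rmult_lt_0_compat; [lra|].
    apply gap_sup_pos; auto; lra. }
  split.
  { apply continuous_on_forall. intros x _.
    apply (continuous_scal_r (K := R_AbsRing) (c / 2) (gap_sup xibar)).
    exact (gap_sup_continuous xibar Hxb_nonneg x). }
  split.
  { intros a b Ha Hb Hab. apply Rmult_lt_compat_l; [lra|].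
    pose proof (gap_sup_scale_le xibar Hxb_nonneg a b ltac:(lra) ltac:(lra)).
    pose proof (gap_sup_pos xibar Hxb_nonneg b Hcont Hxb0 ltac:(lra)). nra. }
  intros theta rho Htheta Hrho.
  destruct (Hder rho Hrho) as [Hdrho HDrho].
  assert (HcD : c <= Derive l rho)
    by (apply Derive_convex_le; [exact Hconv | apply Hder; lra | exact Hdrho | exact Hrho]).
  assert (Hc2 : c / 2 > 0) by lra.
  enough (gap_sup xibar theta <= psi l theta rho / (c / 2))
    by (apply (Rle_div_r _ _ _ Hc2) in H; lra).
  apply gap_sup_le; [exact Hxb_nonneg|]. intros z Hz. apply (Rle_div_r _ _ _ Hc2).
  pose proof (psi_ge_xi l Hmono Hconv Hnonneg theta rho z (xibar z) c
                ltac:(lra) Hdrho HDrho ltac:(lra) (proj1 Hz) (Hxi z rho (proj1 Hz) Hrho)).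
  lra.
Qed.
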